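(* Let $p$ be a prime and let $A$, $B$ be $p$-groups with $|A|=p^a$, $|B|=p^b$, $a,b\geq 1$. Let $p^d$ be the maximum order of an element of $A$. For an integer $m\ge 1$ let $s_m$ be the number of elements $g\in A$ with $g^m=1$, and for a divisor $n$ of $|B|$ let $d_n$ be the number of elements of $B$ of order $n$. For $0\le n\le b$ put $k_n=\frac{p^{-n}d_{p^{b-n}}}{a(B)}$. Then $$a(A\wr B)=p^d a(B)-(p-1)a(B)\sum_{n=0}^{b}k_n\left[\sum_{m=0}^{d-1}p^m\left(\frac{s_{p^m}}{p^a}\right)^{p^n}\right].$$ Moreover, $k_n\ge 0$ for all $n$ and $\sum_{n=0}^{b}k_n=1$.
   Context: For a finite group $G$, the average order is $a(G)=\frac{1}{|G|}\sum_{g\in G}\mathrm{order}(g)$. For groups $A,B$, let $K=\prod_{b\in B}A$, on which $B$ acts by $x\cdot(\alpha_b)_b=(\alpha_{x^{-1}b})_b$ for $x\in B$; the wreath product $A\wr B$ is the semidirect product $K\rtimes B$ for this action. *)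

From HB Require Import structures.
From mathcomp Require Import all_boot all_order all_algebra all_fingroup.
Set Implicit Arguments. Unset Strict Implicit. Unset Printing Implicit Defensive.
Import GRing.Theory Num.Theory.

(* Wreath product A wr B = K >< B with K = prod_{b in B} A, realised as a
   finGroupType on {ffun bT -> aT} * bT, for A = [set: aT], B = [set: bT]. *)
Section Wreath.
Variables aT bT : finGroupType.
Local Open Scope group_scope.

Definition wreath : Type := ({ffun bT -> aT} * bT)%type.
HB.instance Definition _ := Finite.copy wreath ({ffun bT -> aT} * bT)%type.

Definition wr_act (x : bT) (f : {ffun bT -> aT}) : {ffun bT -> aT} :=
  [ffun c => f (x^-1 * c)].

Definition wr_mul (u v : wreath) : wreath :=
  ([ffun c => u.1 c * wr_act u.2 v.1 c], u.2 * v.2).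
Definition wr_one : wreath := ([ffun => 1], 1).
Definition wr_inv (u : wreath) : wreath :=
  ([ffun c => (u.1 (u.2 * c))^-1], u.2^-1).

Lemma wr_mulA : associative wr_mul.
Proof.
move=> [k x] [l y] [m z]; rewrite /wr_mul /wr_act /=; congr (_, _).
  by apply/ffunP=> c; rewrite /= !ffunE /= invMg !mulgA.
by rewrite mulgA.
Qed.

Lemma wr_mul1 : left_id wr_one wr_mul.
Proof.
move=> [k x]; rewrite /wr_mul /wr_act /=; congr (_, _).
  by apply/ffunP=> c; rewrite /= !ffunE invg1 !mul1g.
by rewrite mul1g.
Qed.

Lemma wr_mulV : left_inverse wr_one wr_inv wr_mul.
Proof.
move=> [k x]; rewrite /wr_mul /wr_act /=; congr (_, _).
  by apply/ffunP=> c; rewrite /= !ffunE invgK mulVg.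
by rewrite mulVg.
Qed.

HB.instance Definition _ := Finite_isGroup.Build wreath wr_mulA wr_mul1 wr_mulV.
End Wreath.

Notation "A \wr B" := (wreath A B) (at level 40).

Definition avg_order (gT : finGroupType) : rat :=
  ((\sum_(g : gT) #[g]%g)%:R / #|gT|%:R)%R.

From HB Require Import structures.
From mathcomp Require Import all_boot all_order all_algebra all_fingroup.
Import GRing.Theory Num.Theory.
From mathcomp Require Import cyclic abelian ring.

(* Write an element of A wr B as (f, x), with f : B -> A.  Its #[x]-th power is
   (cycle_prod x f, 1), so its order is #[x] times the order of the base element
   cycle_prod x f; when the exponent of A divides p^d, that order is some p^e and
   p^e = p^d - (p-1) * sum_(e <= m < d) p^m.  The cycle products along a right
   coset of <[x]> are conjugate, and replacing f on a transversal of these cosets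
   by its cycle products is a bijection, so the proportion of f with
   (cycle_prod x f)^(p^m) = 1 is (s_(p^m) / |A|)^(|B| / #[x]).  Summing over x and
   grouping the elements of the p-group B by their order gives the formula, with
   k_n * a(B) = d_(p^(b-n)) / p^n; the same grouping applied to a(B) itself shows
   that the k_n sum to 1. *)

Set Implicit Arguments.
Unset Strict Implicit.
Unset Printing Implicit Defensive.

Lemma card_ffun_restricted (aT bT : finType) (T : {set bT}) (S : {set aT}) :
  #|[set f : {ffun bT -> aT} | [forall t in T, f t \in S]]| =
  #|S| ^ #|T| * #|aT| ^ #|~: T|.
Proof.
pose F t := if t \in T then mem S else mem [set: aT].
have -> : #|[set f : {ffun bT -> aT} | [forall t in T, f t \in S]]| = #|family F|.
  apply: eq_card => f; rewrite inE; apply/forall_inP/familyP => fS t.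
    by rewrite /F; case: ifP => Tt; [apply: fS | rewrite inE].
  by move=> Tt; have := fS t; rewrite /F Tt.
rewrite card_family foldrE big_map big_enum (bigID (mem T)) /=.
rewrite (eq_bigr (fun=> #|S|)) => [|t Tt]; last by rewrite /F Tt.
rewrite [X in _ * X](eq_bigr (fun=> #|aT|)) => [|t /negbTE Tt]; last first.
  by rewrite /F Tt cardsT.
by rewrite !prod_nat_const; congr (_ ^ _ * _ ^ _); apply: eq_card => t; rewrite !inE.
Qed.

Section CycleProducts.
Variables (aT bT : finGroupType) (x : bT).
Local Open Scope group_scope.
Local Notation X := <[x]>%G.

Definition cycle_prod (f : {ffun bT -> aT}) : {ffun bT -> aT} :=
  [ffun c => \prod_(i < #[x]) f (x ^- i * c)].

Lemma cycle_prodMx f c : cycle_prod f (x * c) = cycle_prod f c ^ (f (x * c))^-1.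
Proof.
rewrite !ffunE; case: #[x] (order_gt0 x) (expg_order x) => // n _ xn1.
rewrite big_ord_recl big_ord_recr /= expg0 invg1 mul1g.
have -> : x ^- n * c = x * c by rewrite -[x ^- n]mulg1 -xn1 expgSr mulgA mulVg mul1g.
rewrite conjgE invgK mulgK; congr (_ * _); apply: eq_bigr => i _.
by rewrite /bump leq0n add1n expgS invMg !mulgA mulgKV.
Qed.

Definition cycle_transversal := [set c | repr (X :* c) == c].
Local Notation Tr := cycle_transversal.

Lemma cycle_transversal_repr c : repr (X :* c) \in Tr.
Proof. by rewrite inE (rcoset_eqP (mem_repr _ (rcoset_refl X c))). Qed.

Lemma repr_cycle_rcoset c : exists j, repr (X :* c) = x ^+ j * c.
Proof.
by have /rcosetP[h /cycleP[j ->] ->] := mem_repr _ (rcoset_refl X c); exists j.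
Qed.

Lemma cycle_transversal_uniq : {in Tr &, forall t t', t' \in X :* t -> t' = t}.
Proof.
by move=> t t'; rewrite !inE => /eqP tT /eqP t'T /rcoset_eqP XtE; rewrite -tT -t'T XtE.
Qed.

Lemma card_cycle_transversal : #|Tr| = #|bT| %/ #[x].
Proof.
have <- : #|[set X :* t | t in Tr]| = #|Tr|.
  apply: card_in_imset => t t' Tt Tt' XtE; apply: cycle_transversal_uniq => //.
  by rewrite -XtE rcoset_refl.
have -> : [set X :* t | t in Tr] = rcosets X [set: bT].
  apply/setP => C; apply/imsetP/rcosetsP => [[t _ ->] | [c _ ->]].
    by exists t; rewrite ?inE.
  exists (repr (X :* c)); first exact: cycle_transversal_repr.
  by apply/esym/rcoset_eqP; apply: mem_repr (rcoset_refl X c).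
by rewrite -cardsT -(Lagrange (subsetT X)) mulKn.
Qed.

Lemma cycle_transversal_shift t i :
  t \in Tr -> 0 < i < #[x] -> x ^- i * t \notin Tr.
Proof.
move=> Tt /andP[i_gt0 i_lt]; apply/negP => Txt.
have /eqP : x ^- i * t = 1 * t.
  by rewrite mul1g; apply: cycle_transversal_uniq; rewrite ?mem_rcoset ?mulgK ?groupV ?mem_cycle.
rewrite (inj_eq (mulIg t)) invg_eq1 -order_dvdn => /(dvdn_leq i_gt0).
by rewrite leqNgt i_lt.
Qed.

Definition transversal_subst f : {ffun bT -> aT} :=
  [ffun c => if c \in Tr then cycle_prod f c else f c].

(* Injective because the factors of [cycle_prod f t] other than [f t] are
   values of [f] off the transversal. *)
Lemma transversal_subst_inj : injective transversal_subst.
Proof.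
move=> f1 f2 E; have Ec c : transversal_subst f1 c = transversal_subst f2 c by rewrite E.
have offTr c : c \notin Tr -> f1 c = f2 c by move=> Tc; have := Ec c; rewrite !ffunE (negbTE Tc).
apply/ffunP => c; have [Tc | /offTr //] := boolP (c \in Tr).
move: (Ec c); rewrite !ffunE Tc; case: #[x] (order_gt0 x) cycle_transversal_shift => // n _ shift.
rewrite !big_ord_recl expg0 invg1 !mul1g.
rewrite (eq_bigr (fun i : 'I_n => f2 (x ^- bump 0 i * c))); first exact: mulIg.
by move=> i _; apply: offTr; apply: shift => //=; rewrite ltnS ltn_ord.
Qed.

Variable S : {set aT}.
Hypothesis S_conj : forall y z, (y ^ z \in S) = (y \in S).

Lemma mem_cycle_prodXM f c j : (cycle_prod f (x ^+ j * c) \in S) = (cycle_prod f c \in S).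
Proof.
elim: j => [|j IHj]; first by rewrite expg0 mul1g.
by rewrite expgS -mulgA cycle_prodMx S_conj.
Qed.

Lemma card_cycle_prod_in :
  #|[set f | [forall c, cycle_prod f c \in S]]| =
  (#|S| ^ (#|bT| %/ #[x]) * #|aT| ^ (#|bT| - #|bT| %/ #[x]))%N.
Proof.
rewrite -card_cycle_transversal -[in #|bT|](cardsC Tr) addKn -card_ffun_restricted.
rewrite -[RHS](card_preimset _ transversal_subst_inj); apply: eq_card => f; rewrite !inE.
apply/forallP/forall_inP => [fS t Tt | fS c]; first by rewrite ffunE Tt.
have [j def_c] := repr_cycle_rcoset c.
rewrite -(mem_cycle_prodXM f c j) -def_c.
by have := fS _ (cycle_transversal_repr c); rewrite ffunE cycle_transversal_repr.
Qed.
End CycleProducts.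

Section WreathPowers.
Variables aT bT : finGroupType.
Local Open Scope group_scope.
Implicit Types (f h : {ffun bT -> aT}) (x : bT).

Lemma wr_mulE (u v : aT \wr bT) :
  u * v = ([ffun c => u.1 c * v.1 (u.2^-1 * c)], u.2 * v.2).
Proof. by congr (_, _); apply/ffunP => c; rewrite !ffunE. Qed.

Lemma wr_expE f x n : ((f, x) : aT \wr bT) ^+ n =
  ([ffun c => \prod_(i < n) f (x ^- i * c)], x ^+ n).
Proof.
elim: n => [|n IHn].
  by congr (_, _); apply/ffunP => c; rewrite !ffunE big_ord0.
rewrite expgS IHn wr_mulE; congr (_, _); last by rewrite expgS.
apply/ffunP => c.
rewrite !ffunE big_ord_recl expg0 invg1 mul1g; congr (_ * _); apply: eq_bigr => i _.
by rewrite mulgA -invMg -expgS.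
Qed.

Lemma wr_exp_order f x : ((f, x) : aT \wr bT) ^+ #[x] = (cycle_prod x f, 1).
Proof. by rewrite wr_expE expg_order. Qed.

Lemma order_wr f x :
  #[(f, x) : aT \wr bT] = (#[x] * #[(cycle_prod x f, 1%g) : aT \wr bT])%N.
Proof.
have x_dvd : (#[x] %| #[(f, x) : aT \wr bT])%N.
  by have /(congr1 snd) := expg_order ((f, x) : aT \wr bT); rewrite wr_expE order_dvdn => /= ->.
by rewrite -wr_exp_order orderXdiv // mulnC divnK.
Qed.

Lemma wr_base_expg_eq1 h n :
  (((h, 1) : aT \wr bT) ^+ n == 1) = [forall c, h c ^+ n == 1].
Proof.
have -> : ((h, 1) : aT \wr bT) ^+ n = ([ffun c => h c ^+ n], 1).
  rewrite wr_expE expg1n; congr (_, _); apply/ffunP => c; rewrite !ffunE.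
  rewrite (eq_bigr (fun=> h c)) ?big_const_ord ?iter_mulg_1 // => i _.
  by rewrite expg1n invg1 mul1g.
apply/eqP/forallP => [hn1 c | hn1]; last first.
  by congr (_, _); apply/ffunP => c; rewrite !ffunE; apply/eqP.
by have /(congr1 (fun u : aT \wr bT => u.1 c)) := hn1; rewrite /= !ffunE => ->.
Qed.
End WreathPowers.

Lemma sumr_indicator (R : pzSemiRingType) (T : finType) (P : pred T) :
  (\sum_(t : T) (P t)%:R = #|[set t | P t]|%:R :> R)%R.
Proof.
rewrite -sum1_card natr_sum [RHS]big_mkcond; apply: eq_bigr => t _.
by rewrite inE; case: (P t).
Qed.

Lemma geometric_tail (R : comPzRingType) (q : R) (e d : nat) : e <= d ->
  (\sum_(m < d) (q - 1) * q ^+ m * (e <= m)%:R = q ^+ d - q ^+ e)%R.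
Proof.
elim: d => [|d IHd]; first by rewrite leqn0 => /eqP ->; rewrite big_ord0 subrr.
rewrite big_ord_recr /= leq_eqVlt => /predU1P[-> | ]; last first.
  by rewrite ltnS => le_ed; rewrite IHd // le_ed mulr1 exprS; ring.
rewrite ltnn mulr0 addr0 subrr big1 // => m _.
by rewrite ltnNge (ltnW (ltn_ord m)) mulr0.
Qed.

(* When the exponent of [aT] divides [p ^ d], this is the average order of an
   element of the direct power [aT ^ r]. *)
Definition avg_order_power (p d : nat) (aT : finGroupType) (r : nat) : rat :=
  (p%:R ^+ d - (p%:R - 1) *
    \sum_(m < d) p%:R ^+ m * (#|[set g : aT | (g ^+ (p ^ m) == 1)%g]|%:R / #|aT|%:R) ^+ r)%R.

Section AvgOrderWreath.
Variables (p d : nat) (aT bT : finGroupType).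
Hypotheses (p_pr : prime p) (expA : exponent [set: aT] %| p ^ d).
Local Open Scope ring_scope.

Lemma natr_order_wr_base (h : {ffun bT -> aT}) :
  #[(h, 1%g) : aT \wr bT]%g%:R =
  p%:R ^+ d - (p%:R - 1) * \sum_(m < d) p%:R ^+ m * [forall c, (h c ^+ (p ^ m) == 1)%g]%:R
  :> rat.
Proof.
have /(dvdn_pfactor _ _ p_pr)[e le_ed def_o] : (#[(h, 1%g) : aT \wr bT]%g %| p ^ d)%N.
  rewrite order_dvdn wr_base_expg_eq1; apply/forallP => c.
  by apply/eqP; apply: (exponentP expA); rewrite inE.
rewrite def_o mulr_sumr (eq_bigr (fun m : 'I_d => (p%:R - 1) * p%:R ^+ m * (e <= m)%:R)).
  by rewrite geometric_tail // opprB addrC subrK natrX.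
move=> m _; rewrite mulrA; congr (_ * (nat_of_bool _)%:R).
by rewrite -(dvdn_Pexp2l _ _ (prime_gt1 p_pr)) -def_o order_dvdn wr_base_expg_eq1.
Qed.

Lemma sum_order_wr_fiber (x : bT) :
  \sum_(f : {ffun bT -> aT}) #[(f, x) : aT \wr bT]%g%:R =
  (#|aT| ^ #|bT|)%:R * (#[x]%g%:R * avg_order_power p d aT (#|bT| %/ #[x]%g)) :> rat.
Proof.
set r := (#|bT| %/ #[x]%g)%N; set N : rat := (#|aT| ^ #|bT|)%:R.
have count_fiber m : \sum_(f : {ffun bT -> aT}) [forall c, (cycle_prod x f c ^+ (p ^ m) == 1)%g]%:R
    = N * (#|[set g : aT | (g ^+ (p ^ m) == 1)%g]|%:R / #|aT|%:R) ^+ r.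
  set S := [set g : aT | _].
  have S_conj y z : ((y ^ z)%g \in S) = (y \in S) by rewrite !inE -conjXg conjg_eq1.
  have /eqP aT_neq0 : #|aT| != 0%N by rewrite -lt0n -cardsT cardG_gt0.
  rewrite sumr_indicator (eq_card (B := [set f | [forall c, cycle_prod x f c \in S]])); last first.
    by move=> f; rewrite !inE; apply: eq_forallb => c; rewrite inE.
  have split_N : N = (#|aT| ^ r)%:R * (#|aT| ^ (#|bT| - r))%:R.
    by rewrite -natrM -expnD subnKC ?leq_div.
  rewrite card_cycle_prod_in // natrM split_N !natrX expr_div_n.
  by field; rewrite expf_neq0 // pnatr_eq0; apply/eqP.
under eq_bigr do rewrite order_wr natrM natr_order_wr_base.
rewrite -mulr_sumr sumrB sumr_const card_ffun -mulr_sumr exchange_big /=.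
under eq_bigr do rewrite -mulr_sumr count_fiber mulrCA.
by rewrite -mulr_sumr -mulr_natr /avg_order_power; ring.
Qed.

Lemma avg_order_wr : avg_order (aT \wr bT) =
  (\sum_(x : bT) #[x]%g%:R * avg_order_power p d aT (#|bT| %/ #[x]%g)) / #|bT|%:R.
Proof.
rewrite /avg_order.
have -> : \sum_(u : aT \wr bT) #[u]%g =
          \sum_(x : bT) \sum_(f : {ffun bT -> aT}) #[(f, x) : aT \wr bT]%g.
  by rewrite exchange_big pair_big; apply: eq_bigr => -[f x].
rewrite natr_sum.
under eq_bigr do rewrite natr_sum sum_order_wr_fiber.
rewrite -mulr_sumr card_prod card_ffun natrM; field.
by rewrite !pnatr_eq0 -!lt0n expn_gt0 -!cardsT !cardG_gt0.
Qed.
End AvgOrderWreath.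

Lemma avg_order_gt0 (gT : finGroupType) : (0 < avg_order gT)%R.
Proof.
rewrite /avg_order divr_gt0 // ltr0n -?cardsT ?cardG_gt0 //.
by rewrite (bigD1 1%g) //= addn_gt0 order_gt0.
Qed.

Section PGroupOrders.
Variables (gT : finGroupType) (p b : nat).
Hypotheses (p_pr : prime p) (cardG : #|gT| = p ^ b).

Lemma order_pgroup_exists (x : gT) : exists n : 'I_b.+1, #[x]%g = p ^ (b - n).
Proof.
have /(dvdn_pfactor _ _ p_pr)[e le_eb ->] : #[x]%g %| p ^ b.
  by rewrite -cardG -cardsT order_dvdG ?inE.
by exists (Ordinal (leq_subr e b : b - e < b.+1)); rewrite /= subKn.
Qed.

Lemma exponent_pgroup_dvdn d :
  (forall x : gT, #[x]%g <= p ^ d) -> exponent [set: gT] %| p ^ d.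
Proof.
move=> le_order; apply/exponentP => x _; apply/eqP; rewrite -order_dvdn.
have [n def_x] := order_pgroup_exists x.
by rewrite def_x dvdn_Pexp2l ?prime_gt1 // -(leq_exp2l _ _ (prime_gt1 p_pr)) -def_x.
Qed.

Local Open Scope ring_scope.

Lemma sum_order_pgroup (R : numFieldType) (G : nat -> R) :
  (\sum_(x : gT) #[x]%g%:R * G (#|gT| %/ #[x]%g)%N) / #|gT|%:R =
  \sum_(n < b.+1) #|[set g : gT | #[g]%g == (p ^ (b - n))%N]|%:R / (p ^ n)%:R * G (p ^ n)%N.
Proof.
have p_gt0 := prime_gt0 p_pr.
have pX_neq0 n : (p ^ n)%:R != 0 :> R by rewrite pnatr_eq0 -lt0n expn_gt0 p_gt0.
pose c (n : 'I_b.+1) : R := (p ^ n)%:R^-1 * G (p ^ n)%N.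
transitivity (\sum_(x : gT) \sum_(n < b.+1) (#[x]%g == p ^ (b - n))%N%:R * c n).
  rewrite mulr_suml; apply: eq_bigr => x _.
  have [n0 def_x] := order_pgroup_exists x.
  rewrite (bigD1 n0) //= def_x eqxx big1 => [|n n_neq0].
    have pb_split : (p ^ b = p ^ (b - n0) * p ^ n0)%N by rewrite -expnD subnK // -ltnS.
    rewrite cardG {1}pb_split mulKn ?expn_gt0 ?p_gt0 // addr0 mul1r /c pb_split natrM.
    by field; rewrite !pX_neq0.
  rewrite eqn_exp2l ?prime_gt1 //; case: eqP => [|_]; last by rewrite mul0r.
  move/(congr1 (subn b)); rewrite !subKn ?(ltnSE (ltn_ord _)) // => /val_inj eq_n.
  by rewrite eq_n eqxx in n_neq0.
rewrite exchange_big; apply: eq_bigr => n _.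
by rewrite -mulr_suml sumr_indicator /c mulrA.
Qed.
End PGroupOrders.

Theorem theorem2 (p a b d : nat) (aT bT : finGroupType)
  (pr_p : prime p) (cardA : #|aT| = p ^ a) (cardB : #|bT| = p ^ b)
  (a_ge1 : 1 <= a) (b_ge1 : 1 <= b)
  (hd : p ^ d = \max_(g : aT) #[g]%g) :
  let s := fun m : nat => #|[set g : aT | (g ^+ m == 1)%g]| in
  let dn := fun n : nat => #|[set g : bT | #[g]%g == n]| in
  let k := fun n : nat =>
    ((dn (p ^ (b - n))%N)%:R / (p ^ n)%N%:R / avg_order bT)%R : rat in
  [/\ avg_order (aT \wr bT) =
        (p%:R ^+ d * avg_order bT
         - (p%:R - 1) * avg_order bT *
           \sum_(n < b.+1) k n *
             \sum_(m < d) p%:R ^+ m * ((s (p ^ m)%N)%:R / p%:R ^+ a) ^+ (p ^ n)%N)%R,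
      (forall n : nat, (n <= b)%N -> (0 <= k n)%R)
    & (\sum_(n < b.+1) k n = 1)%R].
Proof.
Local Open Scope ring_scope.
move=> s dn k.
have expA : (exponent [set: aT] %| p ^ d)%N.
  apply: (exponent_pgroup_dvdn pr_p cardA) => g; rewrite hd.
  exact: (leq_bigmax (F := fun g : aT => #[g]%g)).
have aB_gt0 := avg_order_gt0 bT.
have aB_def : avg_order bT = \sum_(n < b.+1) (dn (p ^ (b - n))%N)%:R / (p ^ n)%N%:R.
  rewrite /avg_order natr_sum -(eq_bigr _ (fun x _ => mulr1 _)).
  rewrite (sum_order_pgroup pr_p cardB (fun=> 1 : rat)).
  by under eq_bigr do rewrite mulr1.
have sum_k : \sum_(n < b.+1) k n = 1.
  by rewrite -mulr_suml -aB_def divff // lt0r_neq0.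
split=> //; last by move=> n _; rewrite !divr_ge0 ?ltW.
rewrite (avg_order_wr bT pr_p expA) (sum_order_pgroup pr_p cardB).
have w_k n : #|[set g : bT | #[g]%g == (p ^ (b - n))%N]|%:R / (p ^ n)%N%:R = k n * avg_order bT.
  by rewrite /k /dn divfK // lt0r_neq0.
under eq_bigr do rewrite w_k /avg_order_power cardA natrX.
rewrite -[p%:R ^+ d * _]mul1r -sum_k !mulr_suml mulr_sumr -sumrB.
by apply: eq_bigr => n _; rewrite /s; ring.
Qed.
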